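(* Let $K$ be any real number field and let $a',b'$ be arbitrary nonzero elements of $K$. Then there exist a generator $g'$ of $K$ (i.e. $\mathbb{Q}(g')=K$) and $x,y,z\in K$ such that $$a'x^2 + b'y^2 - a'b'z^2 = g'.$$
   Context: A real number field is a field $K\subset\mathbb{R}$ with $[K:\mathbb{Q}]<\infty$. *)

From HB Require Import structures.
From mathcomp Require Import all_boot all_order all_algebra all_field.
From mathcomp Require Import reals.
Set Implicit Arguments. Unset Strict Implicit. Unset Printing Implicit Defensive.
Import Order.TTheory GRing.Theory Num.Theory.
Local Open Scope ring_scope.

(* A number field: K : fieldExtType rat (a field, finite-dimensional over Q).
   It is a *real* number field when it embeds (as a field) into the reals R.
   (Any ring morphism out of a field is injective, so K is isomorphic to a
   subfield of R.) *)
Definition real_embeddable (R : realType) (K : fieldExtType rat) : Prop :=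
  exists f : {rmorphism K -> R}, True.

Definition generator (K : fieldExtType rat) (g : K) : bool :=
  (<<1%VS; g>>%VS == fullv)%VS.

From HB Require Import structures.
From mathcomp Require Import all_boot all_order all_algebra all_field.
From mathcomp Require Import reals.
From mathcomp Require Import ring.
Import GRing.Theory.
Local Open Scope ring_scope.

(* Put F := Q(a', b').  Some f with F(f^2) = K exists: shifting a primitive
   element t of K/F by an integer m with p(-t - 2m) != 0, where p is the
   minimal polynomial of t, makes f := t + m lie in F(f^2), since otherwise
   f and -f would be conjugate over F(f^2).  Two applications of the
   primitive element theorem, with square integer coefficients k^2 and j^2,
   then give a generator
     g' = a' + k^2 (b' - j^2 a' b' f^2) = a' 1^2 + b' k^2 - a' b' (k j f)^2
   of a field containing a', b', a' b' f^2, hence f^2, hence all of K. *)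

Section CharacteristicZeroExtension.

Variables (F0 : fieldType) (L : fieldExtType F0).
Hypothesis L_char0 : has_pchar0 L.

Lemma natr_inj_pchar0 : injective (fun n : nat => n%:R : L).
Proof.
have /pcharf0P natr_eq0 := L_char0.
move=> m n /eqP; wlog le_mn : m n / (m <= n)%N => [IH|].
  by case: (leqP m n) => [/IH//|/ltnW le_nm]; rewrite eq_sym => /(IH _ _ le_nm).
rewrite eq_sym -subr_eq0 -natrB // natr_eq0 subn_eq0 => le_nm.
by apply/eqP; rewrite eqn_leq le_mn.
Qed.

Lemma exists_nonroot_inj (p : {poly L}) (s : nat -> L) :
  p != 0 -> injective s -> exists n, ~~ root p (s n).
Proof.
move=> nz_p inj_s.
have uniq_s : uniq_roots (mkseq s (size p)) by rewrite uniq_rootsE mkseq_uniq.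
have : ~~ all (root p) (mkseq s (size p)).
  apply/negP => /(max_ring_poly_roots nz_p)/(_ uniq_s).
  by rewrite size_mkseq ltnn.
by rewrite all_map => /allPn[n _ ps_n]; exists n.
Qed.

Lemma exists_sqr_primitive_element (x y : L) : exists k : nat,
  x \in <<1; (k ^ 2)%:R * y - x>>%VS /\ y \in <<1; (k ^ 2)%:R * y - x>>%VS.
Proof.
have /polyOver_subvs[p Dp] := minPolyOver 1 x.
have nz_p : p != 0.
  by rewrite -(map_poly_eq0 vsval) -Dp monic_neq0 ?monic_minPoly.
have px0 : root (map_poly vsval p) x by rewrite -Dp root_minPoly.
have /polyOver_subvs[q Dq] := minPolyOver 1 y.
have qy0 : root (map_poly vsval q) y by rewrite -Dq root_minPoly.
have sep_q : separable_poly q.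
  by rewrite -(separable_map vsval) -Dq; apply: pcharf0_separable.
have [r nz_r PETr] := large_field_PET nz_p px0 qy0 sep_q.
have inj_sqr : injective (fun k : nat => (k ^ 2)%:R : L).
  by move=> m n /natr_inj_pchar0/sqrn_inj.
have [k r_k] := exists_nonroot_inj _ _ nz_r inj_sqr.
have := PETr (k ^ 2)%:R; rewrite rmorph_nat => /(_ r_k)[[p1 Dx] [q1 Dy]].
exists k.
set z := _ * y - x in Dx Dy *.
have mem_eval (s : {poly subvs_of (1%AS : {subfield L})}) :
    (map_poly vsval s).[z] \in <<1; z>>%VS.
  rewrite rpred_horner ?memv_adjoin ?(polyOverSv (subv_adjoin 1%AS z)) //.
  by apply/polyOver_subvs; exists s.
by rewrite -Dx -Dy !mem_eval.
Qed.

Lemma root_opp_notin_adjoin_sqr {E : {subfield L}} {u : L} (P : {poly L}) :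
  u \notin <<E; u ^+ 2>>%VS -> P \is a polyOver E -> root P u -> root P (- u).
Proof.
move=> u_notin P_E Pu0; set M := <<E; u ^+ 2>>%AS.
have dvd_P : minPoly M u %| P.
  by apply: minPoly_dvdp => //; apply: polyOverSv P_E; apply: subv_adjoin.
pose q := 'X^2 - (u ^+ 2)%:P : {poly L}.
have size_q : size q = 3%N by rewrite size_XnsubC.
have dvd_q : minPoly M u %| q.
  apply: minPoly_dvdp; last by rewrite /root !hornerE subrr.
  by rewrite rpredB ?rpredX ?polyOverX ?polyOverC ?memv_adjoin.
have nz_q : q != 0 by rewrite -size_poly_eq0 size_q.
have deg_ge2 : (1 < adjoin_degree M u)%N.
  have := root_size_gt1 (monic_neq0 (monic_minPoly M u)) (root_minPoly M u).
  rewrite size_minPoly ltnS => deg_gt0.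
  by rewrite ltn_neqAle eq_sym adjoin_deg_eq1 u_notin.
have deg_le2 : (adjoin_degree M u <= 2)%N.
  by have := dvdp_leq nz_q dvd_q; rewrite size_q size_minPoly.
have : minPoly M u %= q.
  by rewrite -dvdp_size_eqp // size_q size_minPoly eqSS eqn_leq deg_le2.
move/eqp_root => min_q; apply: root_dvdp dvd_P _.
by rewrite min_q /root !hornerE sqrrN subrr.
Qed.

Lemma exists_adjoin_sqr_full (E : {subfield L}) : exists f, <<E; f ^+ 2>>%VS = fullv.
Proof.
have sepE : separable E {:L}%AS.
  by apply/separableP => y _; apply: pcharf0_separable.
have Dfull := eq_adjoin_separable_generator sepE (subvf E).
set t := separable_generator E _ in Dfull.
set p := minPoly E t.
have nz_p : p != 0 by rewrite monic_neq0 ?monic_minPoly.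
have inj_s : injective (fun m : nat => - t - (m.*2)%:R).
  by move=> m n /addrI/oppr_inj/natr_inj_pchar0/double_inj.
have [m p_m] := exists_nonroot_inj _ _ nz_p inj_s.
exists (t + m%:R).
have t_m_in : t + m%:R \in <<E; (t + m%:R) ^+ 2>>%VS.
  apply: contraNT p_m => t_m_notin.
  have := root_opp_notin_adjoin_sqr (p \Po ('X - m%:R%:P)) t_m_notin.
  rewrite /root !horner_comp !hornerXsubC addrK opprD -addrA -opprD -natrD addnn.
  apply; last by have := root_minPoly E t.
  by rewrite polyOver_comp ?minPolyOver // rpredB ?polyOverX ?polyOverC ?rpred_nat.
apply/eqP; rewrite eqEsubv subvf /= Dfull.
apply/FadjoinP; split; first exact: subv_adjoin.
by have := rpredB t_m_in (rpred_nat <<E; (t + m%:R) ^+ 2>>%AS m); rewrite addrK.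
Qed.

Lemma quadratic_form_represents_generator (a b : L) : a != 0 -> b != 0 ->
  exists g x y z, <<1; g>>%VS = fullv /\ a * x ^+ 2 + b * y ^+ 2 - a * b * z ^+ 2 = g.
Proof.
move=> nz_a nz_b.
have [f Df] := exists_adjoin_sqr_full <<<<1; a>>; b>>%AS.
have [j [b_w abf_w]] := exists_sqr_primitive_element (- b) (- (a * b * f ^+ 2)).
set w := _ - - b in b_w abf_w.
have [k [a_g w_g]] := exists_sqr_primitive_element (- a) w.
set g := _ - - a in a_g w_g.
exists g, 1, k%:R, (k%:R * j%:R * f); split; last by rewrite /g /w !natrX; ring.
have Qw_Qg : (<<1; w>> <= <<1; g>>)%VS by apply/FadjoinP; rewrite sub1v.
have a_in : a \in <<1; g>>%AS by rewrite -[a]opprK rpredN.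
have b_in : b \in <<1; g>>%AS by rewrite -[b]opprK rpredN (subvP Qw_Qg).
have abf_in : a * b * f ^+ 2 \in <<1; g>>%AS.
  by rewrite -[_ * f ^+ 2]opprK rpredN (subvP Qw_Qg).
have f_in : f ^+ 2 \in <<1; g>>%AS.
  have -> : f ^+ 2 = (a * b)^-1 * (a * b * f ^+ 2) by rewrite mulKf ?mulf_neq0.
  by rewrite rpredM // memvV rpredM.
apply/eqP; rewrite eqEsubv subvf /= -Df.
by apply/FadjoinP; split; [apply/FadjoinP; split; [apply/FadjoinP; rewrite sub1v |] |].
Qed.

End CharacteristicZeroExtension.

Theorem lemma3p4 (R : realType) (K : fieldExtType rat)
  (hK : real_embeddable R K) (a' b' : K) (ha : a' != 0) (hb : b' != 0) :
  exists (g' : K) (x y z : K),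
    generator g' /\ a' * x ^+ 2 + b' * y ^+ 2 - a' * b' * z ^+ 2 = g'.
Proof.
have K_char0 : has_pchar0 K by move=> p; rewrite pchar_lalg Num.Theory.pchar_num.
have [g [x [y [z [Qg_full Dg]]]]] :=
  @quadratic_form_represents_generator _ K K_char0 _ _ ha hb.
by exists g, x, y, z; rewrite /generator Qg_full.
Qed.
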